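(* Let $f:\subseteq X\to\mathbb{N}$ and $f_{\mathbb S}:\subseteq X\to\mathbb{S}$ be single-valued problems that are not constant on their domains. Then (1) $f'$ is co-complete and co-total; (2) $f_{\mathbb S}'$ is co-complete.
   Context: Represented space $(X,\delta_X)$: set with surjective partial $\delta_X:\subseteq\mathbb{N}^\mathbb{N}\to X$. $\mathbb{N}$ is represented by $p\mapsto p(0)$; Sierpiński space $\mathbb{S}=\{0,1\}$ is represented by $\delta_{\mathbb S}(p)=0\iff p=000\dots$. A problem $f:\subseteq X\rightrightarrows Y$ is a partial multi-valued map with nonempty values on its domain; $F\vdash f$ means $\delta_YF(p)\in f(\delta_X(p))$ whenever $\delta_X(p)\in\mathrm{dom}(f)$. $f\le_W g$ iff there are computable partial $H,K:\subseteq\mathbb{N}^\mathbb{N}\to\mathbb{N}^\mathbb{N}$ with $H\langle\mathrm{id},GK\rangle\vdash f$ for all $G\vdash g$ (where $\langle p,q\rangle(2n)=p(n),\langle p,q\rangle(2n+1)=q(n)$). $\lim:\subseteq\mathbb{N}^\mathbb{N}\to\mathbb{N}^\mathbb{N}$ maps $\langle p_0,p_1,\dots\rangle$ to $\lim_n p_n$; the jump $f'$ of $f:\subseteq X\rightrightarrows Y$ is the same map with input representation $\delta_X\circ\lim$. For $p\in\mathbb{N}^\mathbb{N}$, $p-1$ is the concatenation of $p(0)-1,p(1)-1,\dots$ with $0-1$ the empty word; the completion of $(X,\delta_X)$ is $\overline X=X\cup\{\bot\}$ with $\delta_{\overline X}(p)=\delta_X(p-1)$ if $p-1$ is an infinite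 sequence in $\mathrm{dom}(\delta_X)$ and $\bot$ otherwise. For $g:\subseteq U\rightrightarrows V$: $\overline g:\overline U\rightrightarrows\overline V$ equals $g$ on $\mathrm{dom}(g)$ and $\overline V$ elsewhere; $\mathsf Tg:U\rightrightarrows V$ equals $g$ on $\mathrm{dom}(g)$ and $V$ elsewhere. A problem $h$ is co-complete if for all problems $g$: $h\le_W\overline g\iff h\le_W g$; it is co-total if for all problems $g$: $h\le_W\mathsf Tg\iff h\le_W g$. *)

From Stdlib Require Import Arith Lia List Cantor FunctionalExtensionality.
Import ListNotations.

Definition B := nat -> nat.

Inductive rf : Type :=
| rZ : rf
| rS : rf
| rP : nat -> rf
| rC : rf -> list rf -> rf
| rR : rf -> rf -> rf
| rM : rf -> rf.

Inductive reval : rf -> list nat -> nat -> Prop :=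
| ev_Z xs : reval rZ xs 0
| ev_S xs : reval rS xs (S (hd 0 xs))
| ev_P i xs : reval (rP i) xs (nth i xs 0)
| ev_C f gs xs ys z : revals gs xs ys -> reval f ys z -> reval (rC f gs) xs z
| ev_R0 f g xs z : reval f xs z -> reval (rR f g) (0 :: xs) z
| ev_RS f g n xs r z :
    reval (rR f g) (n :: xs) r -> reval g (n :: r :: xs) z ->
    reval (rR f g) (S n :: xs) z
| ev_M f xs y :
    reval f (y :: xs) 0 ->
    (forall z, z < y -> exists w, reval f (z :: xs) (S w)) ->
    reval (rM f) xs y
with revals : list rf -> list nat -> list nat -> Prop :=
| evs_nil xs : revals [] xs []
| evs_cons g gs xs y ys : reval g xs y -> revals gs xs ys -> revals (g :: gs) xs (y :: ys).

Definition computable_nat (a : nat -> nat) : Prop :=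
  exists c : rf, forall n, reval c [n] (a n).

Fixpoint code (l : list nat) : nat :=
  match l with
  | [] => 0
  | x :: l' => S (Cantor.to_nat (x, code l'))
  end.

Definition prefix (p : B) (k : nat) : list nat := map p (seq 0 k).

(** The partial function B -> B (as a functional relation) induced by an
    associate a : nat -> nat:  F(p)(n) = a<n, p[k]> - 1 for the least k with
    a<n, p[k]> > 0.  A partial function on Baire space is computable iff it
    has a computable extension of this form. *)
Definition assoc_fun (a : nat -> nat) (p q : B) : Prop :=
  forall n, exists k,
    a (Cantor.to_nat (n, code (prefix p k))) = S (q n) /\
    (forall j, j < k -> a (Cantor.to_nat (n, code (prefix p j))) = 0).

Definition computable_partial (H : B -> B -> Prop) : Prop :=
  exists a, computable_nat a /\ H = assoc_fun a.

Definition bjoin (p q : B) : B :=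
  fun n => if Nat.even n then p (Nat.div2 n) else q (Nat.div2 n).

Definition partial_fun (G : B -> B -> Prop) : Prop :=
  forall p q1 q2, G p q1 -> G p q2 -> q1 = q2.

Record rep : Type := Rep {
  carrier :> Type;
  delta : B -> carrier -> Prop;
  delta_fun : forall p x y, delta p x -> delta p y -> x = y;
  delta_surj : forall x, exists p, delta p x
}.

Definition problem (X Y : rep) : Type := X -> Y -> Prop.

Definition dom {X Y : rep} (f : problem X Y) (x : X) : Prop := exists y, f x y.

Definition realizes {X Y : rep} (F : B -> B -> Prop) (f : problem X Y) : Prop :=
  forall p x, delta X p x -> dom f x ->
    exists q y, F p q /\ delta Y q y /\ f x y.

Definition weihrauch {X Y U V : rep} (f : problem X Y) (g : problem U V) : Prop :=
  exists H K, computable_partial H /\ computable_partial K /\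
    forall G, partial_fun G -> realizes G g ->
      realizes (fun p r => exists q s, K p q /\ G q s /\ H (bjoin p s) r) f.

Definition Nat_rep : rep.
Proof.
  refine (@Rep nat (fun p n => p 0 = n) _ _).
  - intros p x y -> ->; reflexivity.
  - intros x; exists (fun _ => x); reflexivity.
Defined.

(** Sierpinski space: false = 0 (represented by 000...), true = 1 *)
Definition Sier_rep : rep.
Proof.
  refine (@Rep bool (fun p b => b = false <-> forall n, p n = 0) _ _).
  - intros p [] [] Hx Hy; try reflexivity.
    + apply Hx, Hy; reflexivity.
    + symmetry; apply Hy, Hx; reflexivity.
  - intros [].
    + exists (fun _ => 1); split; [discriminate | intros H; specialize (H 0); discriminate].
    + exists (fun _ => 0); split; auto.
Defined.

Definition limrel (p q : B) : Prop :=
  forall j, exists N, forall n, N <= n -> p (Cantor.to_nat (n, j)) = q j.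

Lemma limrel_fun p q1 q2 : limrel p q1 -> limrel p q2 -> q1 = q2.
Proof.
  intros H1 H2; apply functional_extensionality; intros j.
  destruct (H1 j) as [N1 E1]; destruct (H2 j) as [N2 E2].
  rewrite <- (E1 (N1 + N2)) by lia; apply E2; lia.
Qed.

Definition jump_rep (X : rep) : rep.
Proof.
  refine (@Rep (carrier X) (fun p x => exists q, limrel p q /\ delta X q x) _ _).
  - intros p x y [q1 [L1 D1]] [q2 [L2 D2]].
    pose proof (limrel_fun _ _ _ L1 L2); subst; eapply delta_fun; eauto.
  - intros x; destruct (delta_surj X x) as [q Hq].
    exists (fun m => q (snd (Cantor.of_nat m))); exists q; split; auto.
    intros j; exists 0; intros n _; rewrite Cantor.cancel_of_to; reflexivity.
Defined.

(** the jump f' : same map, input representation delta_X ∘ lim *)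
Definition jump {X Y : rep} (f : problem X Y) : problem (jump_rep X) Y := f.

Fixpoint cnt (p : B) (m : nat) : nat :=
  match m with
  | 0 => 0
  | S m' => cnt p m' + (if Nat.eqb (p m') 0 then 0 else 1)
  end.

(** minus1 p q : p - 1 is the infinite sequence q *)
Definition minus1 (p q : B) : Prop :=
  forall i, exists m, 0 < p m /\ cnt p m = i /\ q i = p m - 1.

Lemma cnt_mono p m1 m2 : m1 <= m2 -> cnt p m1 <= cnt p m2.
Proof. induction 1; simpl; lia. Qed.

Lemma cnt_pos p m : 0 < p m -> cnt p (S m) = S (cnt p m).
Proof. intros H; simpl; destruct (Nat.eqb_spec (p m) 0); lia. Qed.

Lemma minus1_fun p q1 q2 : minus1 p q1 -> minus1 p q2 -> q1 = q2.
Proof.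
  intros H1 H2; apply functional_extensionality; intros i.
  destruct (H1 i) as [m1 [P1 [C1 E1]]]; destruct (H2 i) as [m2 [P2 [C2 E2]]].
  assert (m1 = m2).
  { destruct (Nat.lt_trichotomy m1 m2) as [h|[h|h]]; auto.
    - pose proof (cnt_mono p (S m1) m2 h); rewrite cnt_pos in * by auto; lia.
    - pose proof (cnt_mono p (S m2) m1 h); rewrite cnt_pos in * by auto; lia. }
  subst; congruence.
Qed.

(** None plays the role of ⊥ *)
Definition cdelta (X : rep) (p : B) (o : option X) : Prop :=
  match o with
  | Some x => exists q, minus1 p q /\ delta X q x
  | None => ~ (exists q x, minus1 p q /\ delta X q x)
  end.

Definition completion (X : rep) : rep.
Proof.
  refine (@Rep (option (carrier X)) (cdelta X) _ _).
  - intros p [x|] [y|]; simpl.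
    + intros [q1 [M1 D1]] [q2 [M2 D2]].
      pose proof (minus1_fun _ _ _ M1 M2); subst; f_equal; eapply delta_fun; eauto.
    + intros [q [M D]] N; exfalso; apply N; eauto.
    + intros N [q [M D]]; exfalso; apply N; eauto.
    + reflexivity.
  - intros [x|]; simpl.
    + destruct (delta_surj X x) as [q Hq].
      exists (fun i => S (q i)); exists q; split; auto.
      intros i; exists i; split; [lia|split; [|lia]].
      induction i; simpl; auto. rewrite IHi; simpl; lia.
    + exists (fun _ => 0); intros [q [x [M _]]].
      destruct (M 0) as [m [h _]]; lia.
Defined.

Definition pcompletion {U V : rep} (g : problem U V)
  : problem (completion U) (completion V) :=
  fun u v => forall u', u = Some u' -> dom g u' ->
               exists v', v = Some v' /\ g u' v'.

Definition totalization {U V : rep} (g : problem U V) : problem U V :=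
  fun u v => dom g u -> g u v.

Definition co_complete {X Y : rep} (h : problem X Y) : Prop :=
  forall (U V : rep) (g : problem U V),
    weihrauch h (pcompletion g) <-> weihrauch h g.

Definition co_total {X Y : rep} (h : problem X Y) : Prop :=
  forall (U V : rep) (g : problem U V),
    weihrauch h (totalization g) <-> weihrauch h g.

Definition single_valued {X Y : rep} (f : problem X Y) : Prop :=
  forall x y1 y2, f x y1 -> f x y2 -> y1 = y2.

Definition nonconstant {X Y : rep} (f : problem X Y) : Prop :=
  exists x1 x2 y1 y2, f x1 y1 /\ f x2 y2 /\ y1 <> y2.

(* A query outside dom g, sent to the completion or the totalization of g,
   accepts every answer and so cannot carry information back. Using the
   continuity of the reduction functionals, the freedom to begin a name of a
   limit with any finite prefix, and that f is single-valued and not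
   constant, one finds a cylinder of names on which every query names a
   point of dom g. Grafting the prefix of that cylinder onto every input,
   which leaves the denoted point unchanged, turns the reduction into a
   reduction to g itself. *)

From Stdlib Require Import Arith Lia List Cantor FunctionalExtensionality Classical ClassicalEpsilon.
Import ListNotations.

(** * Expressions for primitive recursion over computable functions *)

(* [Fn a _ e] applies an already computable total function [a]; [Rec b z s]
   iterates [s] [eval b] times from [eval z], with the loop index and the
   accumulator pushed in front of the environment. *)
Inductive exp : Type :=
| Var (j : nat)
| Zero
| Succ (e : exp)
| Fn (a : nat -> nat) (Ha : computable_nat a) (e : exp)
| Rec (b z s : exp).

Fixpoint eval (e : exp) (env : list nat) : nat :=
  match e with
  | Var j => nth j env 0
  | Zero => 0
  | Succ e => S (eval e env)
  | Fn a _ e => a (eval e env)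
  | Rec b z s => nat_rec (fun _ => nat) (eval z env)
                   (fun i r => eval s (i :: r :: env)) (eval b env)
  end.

Lemma revals_projections xs s n :
  revals (map rP (seq s n)) xs (map (fun j => nth j xs 0) (seq s n)).
Proof. revert s; induction n; intros s; simpl; constructor; auto; constructor. Qed.

Lemma map_nth_seq (xs : list nat) : map (fun j => nth j xs 0) (seq 0 (length xs)) = xs.
Proof.
  induction xs; simpl; auto. f_equal. rewrite <- seq_shift, map_map. auto.
Qed.

Lemma eval_reval e k : exists c, forall xs, length xs = k -> reval c xs (eval e xs).
Proof.
  revert k; induction e; intros k.
  - exists (rP j); intros; constructor.
  - exists rZ; intros; constructor.
  - destruct (IHe k) as [c Hc]. exists (rC rS [c]); intros xs Hl.
    econstructor; [constructor; [apply Hc; auto | constructor] | constructor].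
  - destruct (IHe k) as [c Hc]. destruct Ha as [ca Hca].
    exists (rC ca [c]); intros xs Hl.
    econstructor; [constructor; [apply Hc; auto | constructor] | apply Hca].
  - destruct (IHe1 k) as [cb Hb], (IHe2 k) as [cz Hz], (IHe3 (S (S k))) as [cs Hs].
    exists (rC (rR cz cs) (cb :: map rP (seq 0 k))). intros xs Hl.
    econstructor; [constructor; [apply Hb; auto | apply revals_projections] |].
    subst k. rewrite map_nth_seq. simpl.
    induction (eval e1 xs); simpl.
    + constructor. apply Hz; auto.
    + econstructor; [apply IHn | apply Hs; simpl; lia].
Qed.

Lemma computable_eval (e : exp) f : (forall m, eval e [m] = f m) -> computable_nat f.
Proof.
  intros Hf. destruct (eval_reval e 1) as [c Hc]. exists c. intros n.
  rewrite <- Hf. apply Hc. reflexivity.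
Qed.

Fixpoint lift (c d : nat) (e : exp) : exp :=
  match e with
  | Var j => Var (if j <? c then j else j + d)
  | Zero => Zero
  | Succ e => Succ (lift c d e)
  | Fn a H e => Fn a H (lift c d e)
  | Rec b z s => Rec (lift c d b) (lift c d z) (lift (S (S c)) d s)
  end.

Lemma eval_lift e c d env1 ins env2 : length env1 = c -> length ins = d ->
  eval (lift c d e) (env1 ++ ins ++ env2) = eval e (env1 ++ env2).
Proof.
  revert c d env1 ins env2.
  induction e; intros c d env1 ins env2 H1 H2; simpl.
  - destruct (Nat.ltb_spec j c).
    + rewrite !app_nth1 by lia. auto.
    + rewrite !(app_nth2 env1), (app_nth2 ins) by lia. f_equal. lia.
  - auto.
  - rewrite IHe; auto.
  - rewrite IHe; auto.
  - rewrite IHe1, IHe2 by auto.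
    induction (eval e1 (env1 ++ env2)); simpl; auto.
    rewrite IHn. apply (IHe3 _ _ (_ :: _ :: env1)); simpl; auto.
Qed.

Lemma eval_lift0 e x env : eval (lift 0 1 e) (x :: env) = eval e env.
Proof. apply (eval_lift e 0 1 [] [x] env); auto. Qed.

Lemma eval_lift_under e x ins env :
  eval (lift 1 (length ins) e) (x :: ins ++ env) = eval e (x :: env).
Proof. apply (eval_lift e 1 (length ins) [x] ins env); auto. Qed.

Definition ifz (c a b : nat) : nat := match c with 0 => a | _ => b end.

Definition firstnz (E : nat -> nat) (b : nat) : nat :=
  nat_rec (fun _ => nat) 0 (fun i r => ifz r (E i) r) b.

Definition count_nz (E : nat -> nat) (b : nat) : nat :=
  nat_rec (fun _ => nat) 0 (fun i r => r + ifz (E i) 0 1) b.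

Definition tri (s : nat) : nat := nat_rec (fun _ => nat) 0 (fun i m => S i + m) s.

Definition code_build (F : nat -> nat) (len : nat) : nat :=
  nat_rec (fun _ => nat) 0 (fun i r => S (to_nat (F (len - S i), r))) len.

Definition eqbf a b : nat := ifz (a - b + (b - a)) 1 0.
Definition ltbf a b : nat := ifz (S a - b) 1 0.
Definition oddf (n : nat) : nat := nat_rec (fun _ => nat) 0 (fun _ r => ifz r 1 0) n.
Definition div2f (n : nat) : nat := nat_rec (fun _ => nat) 0 (fun i r => r + oddf i) n.

Fixpoint EConst (n : nat) : exp := match n with 0 => Zero | S n => Succ (EConst n) end.
Definition EPred e : exp := Rec e Zero (Var 0).
Definition EAdd e1 e2 : exp := Rec e1 e2 (Succ (Var 1)).
Definition ESub e1 e2 : exp := Rec e2 e1 (EPred (Var 1)).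
Definition EIfz c a b : exp := Rec c a (lift 0 2 b).
Definition ELet e1 e2 : exp := Rec (Succ Zero) e1 (lift 0 1 e2).
Definition EFirst b E : exp := Rec b Zero (EIfz (Var 1) (lift 1 1 E) (Var 1)).
Definition ECount b E : exp := Rec b Zero (EAdd (Var 1) (EIfz (lift 1 1 E) Zero (Succ Zero))).
Definition ETri e : exp := Rec e Zero (EAdd (Succ (Var 0)) (Var 1)).
Definition EToNat x y : exp := EAdd y (ETri (EAdd y x)).
Definition EBuild b F : exp := ELet b (Rec (Var 0) Zero
   (Succ (EToNat (ELet (ESub (Var 2) (Succ (Var 0))) (lift 1 3 F)) (Var 1)))).
Definition EEqb a b : exp := EIfz (EAdd (ESub a b) (ESub b a)) (EConst 1) Zero.
Definition ELtb a b : exp := EIfz (ESub (Succ a) b) (EConst 1) Zero.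
Definition EOdd e : exp := Rec e Zero (EIfz (Var 1) (EConst 1) Zero).
Definition EDiv2 e : exp := Rec e Zero (EAdd (Var 1) (EOdd (Var 0))).

Lemma eval_Var j env : eval (Var j) env = nth j env 0. Proof. reflexivity. Qed.
Lemma eval_Zero env : eval Zero env = 0. Proof. reflexivity. Qed.
Lemma eval_Succ e env : eval (Succ e) env = S (eval e env). Proof. reflexivity. Qed.
Lemma eval_Fn a H e env : eval (Fn a H e) env = a (eval e env). Proof. reflexivity. Qed.

Lemma eval_EConst n env : eval (EConst n) env = n.
Proof. induction n; simpl; auto. Qed.
Lemma eval_EPred e env : eval (EPred e) env = pred (eval e env).
Proof. simpl. destruct (eval e env); auto. Qed.
Lemma eval_EAdd e1 e2 env : eval (EAdd e1 e2) env = eval e1 env + eval e2 env.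
Proof. simpl. induction (eval e1 env); simpl; auto. Qed.
Lemma eval_ESub e1 e2 env : eval (ESub e1 e2) env = eval e1 env - eval e2 env.
Proof.
  simpl. induction (eval e2 env); simpl; [lia|].
  rewrite IHn. destruct (eval e1 env - n) eqn:E; simpl; lia.
Qed.
Lemma eval_EIfz c a b env : eval (EIfz c a b) env = ifz (eval c env) (eval a env) (eval b env).
Proof. simpl. destruct (eval c env); simpl; auto. apply (eval_lift b 0 2 [] [_; _] env); auto. Qed.
Lemma eval_ETri e env : eval (ETri e) env = tri (eval e env).
Proof.
  unfold ETri, tri. cbn -[EAdd]. induction (eval e env); cbn -[EAdd]; auto.
  rewrite IHn, eval_EAdd. reflexivity.
Qed.
Lemma eval_EToNat x y env : eval (EToNat x y) env = to_nat (eval x env, eval y env).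
Proof. unfold EToNat. rewrite eval_EAdd, eval_ETri, eval_EAdd. reflexivity. Qed.

Lemma eval_Rec b z s env g : (forall i r, eval s (i :: r :: env) = g i r) ->
  eval (Rec b z s) env = nat_rec (fun _ => nat) (eval z env) g (eval b env).
Proof. intros H. simpl. f_equal. extensionality i. extensionality r. auto. Qed.

Lemma eval_ELet e1 e2 env f : (forall x, eval e2 (x :: env) = f x) ->
  eval (ELet e1 e2) env = f (eval e1 env).
Proof. intros H. simpl. rewrite <- H. apply eval_lift0. Qed.

Lemma eval_EFirst b E env f : (forall i, eval E (i :: env) = f i) ->
  eval (EFirst b E) env = firstnz f (eval b env).
Proof.
  intros H. unfold EFirst, firstnz. cbn -[EIfz lift].
  induction (eval b env); cbn -[EIfz lift]; auto.
  rewrite IHn, eval_EIfz. cbn -[lift]. rewrite <- H. f_equal. apply (eval_lift_under E n [_]).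
Qed.

Lemma eval_ECount b E env f : (forall i, eval E (i :: env) = f i) ->
  eval (ECount b E) env = count_nz f (eval b env).
Proof.
  intros H. unfold ECount, count_nz. cbn -[EIfz EAdd lift].
  induction (eval b env); cbn -[EIfz EAdd lift]; auto.
  rewrite IHn, eval_EAdd, eval_EIfz. cbn -[lift]. f_equal. f_equal.
  rewrite <- H. apply (eval_lift_under E n [_]).
Qed.

Lemma eval_EBuild b F env f : (forall j, eval F (j :: env) = f j) ->
  eval (EBuild b F) env = code_build f (eval b env).
Proof.
  intros H. unfold EBuild. erewrite eval_ELet; [reflexivity|].
  intros len. cbn -[EToNat ELet ESub lift]. unfold code_build.
  generalize len at 2 4. intros n. induction n; [reflexivity|]. cbn -[eval to_nat].
  rewrite IHn, eval_EToNat. f_equal. f_equal. f_equal.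
  erewrite eval_ELet; [rewrite eval_ESub; reflexivity|].
  intros x. cbn -[lift]. rewrite <- H. apply (eval_lift_under F x [_; _; _]).
Qed.

Lemma eval_EEqb a b env : eval (EEqb a b) env = eqbf (eval a env) (eval b env).
Proof. unfold EEqb. rewrite eval_EIfz, eval_EAdd, !eval_ESub, eval_EConst. reflexivity. Qed.
Lemma eval_ELtb a b env : eval (ELtb a b) env = ltbf (eval a env) (eval b env).
Proof. unfold ELtb. rewrite eval_EIfz, eval_ESub, eval_EConst. reflexivity. Qed.
Lemma eval_EOdd e env : eval (EOdd e) env = oddf (eval e env).
Proof.
  unfold EOdd, oddf. rewrite (eval_Rec _ _ _ _ (fun _ r => ifz r 1 0)); [reflexivity|].
  intros i r. rewrite eval_EIfz. reflexivity.
Qed.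
Lemma eval_EDiv2 e env : eval (EDiv2 e) env = div2f (eval e env).
Proof.
  unfold EDiv2, div2f. rewrite (eval_Rec _ _ _ _ (fun i r => r + oddf i)); [reflexivity|].
  intros i r. rewrite eval_EAdd, eval_EOdd. reflexivity.
Qed.

Create HintDb eval_db.
Hint Rewrite eval_Var eval_Zero eval_Succ eval_Fn eval_EConst eval_EPred eval_EAdd
  eval_ESub eval_EIfz eval_ETri eval_EToNat eval_lift0 eval_EEqb eval_ELtb eval_EOdd
  eval_EDiv2 : eval_db.

(* Rewrites [eval] away; binding combinators leave a side goal about their
   body, solved recursively. *)
Ltac ev :=
  let body := (intros; match goal with |- _ = ?R =>
                 let x := fresh "x" in set (x := R); ev; subst x; reflexivity end) in
  repeat first
   [ progress autorewrite with eval_db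
   | (erewrite eval_ELet; [|body])
   | (erewrite eval_EFirst; [|body])
   | (erewrite eval_ECount; [|body])
   | (erewrite eval_EBuild; [|body]) ];
  cbn [nth].

Lemma firstnz_S E b : firstnz E (S b) = ifz (firstnz E b) (E b) (firstnz E b).
Proof. reflexivity. Qed.
Lemma count_nz_S E b : count_nz E (S b) = count_nz E b + ifz (E b) 0 1.
Proof. reflexivity. Qed.

Lemma firstnz_ext E E' b : (forall j, j < b -> E j = E' j) -> firstnz E b = firstnz E' b.
Proof. intros H. induction b; auto. rewrite !firstnz_S, IHb, H; auto. Qed.

Lemma firstnz_first E i0 b : E i0 <> 0 -> (forall j, j < i0 -> E j = 0) ->
  firstnz E b = if i0 <? b then E i0 else 0.
Proof.
  intros H0 H1. induction b; auto.
  rewrite firstnz_S, IHb.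
  destruct (Nat.ltb_spec i0 b); destruct (Nat.ltb_spec i0 (S b)); try lia.
  - unfold ifz. destruct (E i0); [congruence | auto].
  - replace b with i0 by lia. reflexivity.
  - apply H1. lia.
Qed.

Lemma firstnz_spec E b : (firstnz E b = 0 /\ forall j, j < b -> E j = 0) \/
  (exists i, i < b /\ E i <> 0 /\ (forall j, j < i -> E j = 0) /\ firstnz E b = E i).
Proof.
  induction b.
  - left. split; [reflexivity | lia].
  - rewrite firstnz_S. destruct IHb as [[H1 H2] | [i [H1 [H2 [H3 H4]]]]].
    + rewrite H1. simpl. destruct (E b) eqn:Eb.
      * left. split; auto. intros j hj. destruct (Nat.eq_dec j b); subst; auto. apply H2. lia.
      * right. exists b. repeat split; auto; lia.
    + right. exists i. rewrite H4. unfold ifz. destruct (E i); [congruence|]. repeat split; auto.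
Qed.

Lemma least_nonzero (f : nat -> nat) k : f k <> 0 ->
  exists k0, f k0 <> 0 /\ forall j, j < k0 -> f j = 0.
Proof.
  intros Hk. destruct (firstnz_spec f (S k)) as [[_ H] | [i [_ [H1 [H2 _]]]]]; eauto.
  exfalso. apply Hk, H. lia.
Qed.

Lemma count_nz_initial E n : (forall i, E i <> 0 <-> i < n) ->
  forall b, count_nz E b = min b n.
Proof.
  intros H b. induction b; auto.
  rewrite count_nz_S, IHb. unfold ifz. destruct (E b) eqn:Eb.
  - assert (~ b < n) by (intro h; apply H in h; auto). lia.
  - assert (b < n) by (apply H; lia). lia.
Qed.

Lemma eqbf_spec a b : eqbf a b = if a =? b then 1 else 0.
Proof.
  unfold eqbf. destruct (Nat.eqb_spec a b); [subst; rewrite Nat.sub_diag; reflexivity|].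
  destruct (a - b + (b - a)) eqn:E; [lia | reflexivity].
Qed.

Lemma ltbf_spec a b : ltbf a b = if a <? b then 1 else 0.
Proof.
  unfold ltbf. destruct (Nat.ltb_spec a b); [replace (S a - b) with 0 by lia; reflexivity|].
  destruct (S a - b) eqn:E; [lia | reflexivity].
Qed.

Lemma oddf_div2f n :
  (oddf n = (if Nat.even n then 0 else 1) /\ div2f n = Nat.div2 n) /\
  (oddf (S n) = (if Nat.even (S n) then 0 else 1) /\ div2f (S n) = Nat.div2 (S n)).
Proof.
  induction n; [simpl; auto|].
  destruct IHn as [[A1 A2] [B1 B2]]. split; [split; auto|].
  change (oddf (S (S n))) with (ifz (oddf (S n)) 1 0).
  change (div2f (S (S n))) with (div2f (S n) + oddf (S n)).
  change (div2f (S n)) with (div2f n + oddf n) in *.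
  change (oddf (S n)) with (ifz (oddf n) 1 0) in *.
  change (Nat.even (S (S n))) with (Nat.even n). change (Nat.div2 (S (S n))) with (S (Nat.div2 n)).
  rewrite A1 in *. rewrite A2 in *. destruct (Nat.even n); simpl; split; lia.
Qed.

Lemma oddf_spec n : oddf n = if Nat.even n then 0 else 1.
Proof. apply oddf_div2f. Qed.
Lemma div2f_spec n : div2f n = Nat.div2 n.
Proof. apply oddf_div2f. Qed.

(** * Decoding Cantor pairs and list codes *)

Lemma tri_S j : tri (S j) = S j + tri j.
Proof. reflexivity. Qed.
Lemma tri_mono a b : a <= b -> tri a <= tri b.
Proof. induction 1; auto. rewrite tri_S. lia. Qed.
Lemma tri_ge n : n <= tri n.
Proof. induction n; auto. rewrite tri_S. lia. Qed.

(* [to_nat (x, y) = y + tri (x + y)], so the diagonal [x + y] of [m] is the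
   number of [j] with [tri (S j) <= m]. *)
Definition cantor_diag (m : nat) : nat := count_nz (fun j => ifz (tri (S j) - m) 1 0) m.
Definition unpair2 m : nat := m - tri (cantor_diag m).
Definition unpair1 m : nat := cantor_diag m - unpair2 m.

Lemma of_nat_unpair m : of_nat m = (unpair1 m, unpair2 m).
Proof.
  destruct (of_nat m) as [x y] eqn:E.
  pose proof (cancel_to_of m) as C. rewrite E in C. change (y + tri (y + x) = m) in C.
  assert (Hd : cantor_diag m = y + x).
  { unfold cantor_diag. rewrite (count_nz_initial _ (y + x)).
    - pose proof (tri_ge (y + x)). lia.
    - intros i. split.
      + intros h. unfold ifz in h. destruct (tri (S i) - m) eqn:E2; [|lia].
        destruct (le_lt_dec (S i) (y + x)); auto.
        pose proof (tri_mono (S (y + x)) (S i) ltac:(lia)). rewrite tri_S in H. lia.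
      + intros h. pose proof (tri_mono (S i) (y + x) ltac:(lia)).
        replace (tri (S i) - m) with 0 by lia. simpl. lia. }
  unfold unpair1, unpair2. rewrite Hd. f_equal; lia.
Qed.

Lemma unpair1_to_nat x y : unpair1 (to_nat (x, y)) = x.
Proof. pose proof (of_nat_unpair (to_nat (x, y))). rewrite cancel_of_to in H. congruence. Qed.
Lemma unpair2_to_nat x y : unpair2 (to_nat (x, y)) = y.
Proof. pose proof (of_nat_unpair (to_nat (x, y))). rewrite cancel_of_to in H. congruence. Qed.

Definition code_hd c : nat := unpair1 (pred c).
Definition code_tl c : nat := unpair2 (pred c).
Definition code_drop c i : nat := nat_rec (fun _ => nat) c (fun _ r => code_tl r) i.
Definition code_len c : nat := count_nz (fun i => code_drop c i) c.
Definition code_nth c i : nat := code_hd (code_drop c i).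

Lemma code_hd_cons x l : code_hd (code (x :: l)) = x.
Proof. apply unpair1_to_nat. Qed.
Lemma code_tl_cons x l : code_tl (code (x :: l)) = code l.
Proof. apply unpair2_to_nat. Qed.

Lemma code_drop_code l i : code_drop (code l) i = code (skipn i l).
Proof.
  induction i; [reflexivity|]. change (code_tl (code_drop (code l) i) = code (skipn (S i) l)).
  rewrite IHi. clear IHi. revert l. induction i; intros l; destruct l; simpl; auto.
  apply code_tl_cons.
Qed.

Lemma length_le_code l : length l <= code l.
Proof. induction l; simpl; auto. pose proof (to_nat_non_decreasing a (code l)). lia. Qed.

Lemma code_eq0 l : code l = 0 <-> l = [].
Proof. destruct l; simpl; split; congruence. Qed.

Lemma code_len_code l : code_len (code l) = length l.
Proof.
  unfold code_len. rewrite (count_nz_initial _ (length l)).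
  - pose proof (length_le_code l). lia.
  - intros i. rewrite code_drop_code, code_eq0. split.
    + intros h. destruct (le_lt_dec (length l) i); auto.
      exfalso. apply h. apply skipn_all2. auto.
    + intros h e. apply (f_equal (@length nat)) in e. rewrite length_skipn in e. simpl in e. lia.
Qed.

Lemma code_nth_code l i : code_nth (code l) i = nth i l 0.
Proof.
  unfold code_nth. rewrite code_drop_code. revert i; induction l; intros i.
  - rewrite skipn_nil. destruct i; reflexivity.
  - destruct i; simpl; [apply code_hd_cons | apply IHl].
Qed.

Lemma code_build_code F len : code_build F len = code (map F (seq 0 len)).
Proof.
  unfold code_build. set (step := fun i r => S (to_nat (F (len - S i), r))).
  assert (H : forall n, n <= len ->
    nat_rec (fun _ => nat) 0 step n = code (map F (seq (len - n) n))).
  { induction n; intros h; [reflexivity|].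
    change (step n (nat_rec (fun _ => nat) 0 step n) = code (map F (seq (len - S n) (S n)))).
    rewrite IHn by lia. unfold step.
    replace (len - n) with (S (len - S n)) by lia. reflexivity. }
  rewrite H, Nat.sub_diag; auto.
Qed.

Definition EUnpair2 m : exp :=
  ESub m (ETri (ECount m (EIfz (ESub (ETri (Succ (Var 0))) (lift 0 1 m)) (EConst 1) Zero))).
Definition EUnpair1 m : exp :=
  ESub (ECount m (EIfz (ESub (ETri (Succ (Var 0))) (lift 0 1 m)) (EConst 1) Zero)) (EUnpair2 m).
Definition ECodeDrop c i : exp := Rec i c (EUnpair2 (EPred (Var 1))).
Definition ECodeLen c : exp := ECount c (ECodeDrop (lift 0 1 c) (Var 0)).
Definition ECodeNth c i : exp := EUnpair1 (EPred (ECodeDrop c i)).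

Lemma eval_EUnpair2 m env : eval (EUnpair2 m) env = unpair2 (eval m env).
Proof. unfold EUnpair2. ev. reflexivity. Qed.
Lemma eval_EUnpair1 m env : eval (EUnpair1 m) env = unpair1 (eval m env).
Proof. unfold EUnpair1. ev. rewrite eval_EUnpair2. reflexivity. Qed.
Hint Rewrite eval_EUnpair1 eval_EUnpair2 : eval_db.

Lemma eval_ECodeDrop c i env : eval (ECodeDrop c i) env = code_drop (eval c env) (eval i env).
Proof.
  unfold ECodeDrop, code_drop. erewrite eval_Rec; [reflexivity|]. intros. ev. reflexivity.
Qed.
Hint Rewrite eval_ECodeDrop : eval_db.
Lemma eval_ECodeLen c env : eval (ECodeLen c) env = code_len (eval c env).
Proof. unfold ECodeLen. ev. reflexivity. Qed.
Lemma eval_ECodeNth c i env : eval (ECodeNth c i) env = code_nth (eval c env) (eval i env).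
Proof. unfold ECodeNth. ev. reflexivity. Qed.
Hint Rewrite eval_ECodeLen eval_ECodeNth : eval_db.

(** * Associates *)

Definition agree (k : nat) (p p' : B) : Prop := forall i, i < k -> p i = p' i.

Lemma agree_sym k p p' : agree k p p' -> agree k p' p.
Proof. intros H i hi. symmetry. auto. Qed.
Lemma agree_trans k p p' p'' : agree k p p' -> agree k p' p'' -> agree k p p''.
Proof. intros H H' i hi. rewrite H; auto. Qed.
Lemma agree_weaken k k' p p' : k' <= k -> agree k p p' -> agree k' p p'.
Proof. intros hk H i hi. apply H. lia. Qed.

Lemma length_prefix p k : length (prefix p k) = k.
Proof. unfold prefix. rewrite length_map, length_seq. auto. Qed.

Lemma nth_prefix p k i : i < k -> nth i (prefix p k) 0 = p i.
Proof.
  intros h. unfold prefix.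
  rewrite nth_indep with (d' := p 0) by (rewrite length_map, length_seq; auto).
  rewrite map_nth, seq_nth; auto.
Qed.

Lemma prefix_agree p p' k : agree k p p' -> prefix p k = prefix p' k.
Proof. intros H. apply map_ext_in. intros i hi. apply in_seq in hi. apply H. lia. Qed.

Lemma assoc_fun_functional a p q1 q2 : assoc_fun a p q1 -> assoc_fun a p q2 -> q1 = q2.
Proof.
  intros H1 H2. extensionality n.
  destruct (H1 n) as [k1 [A1 B1]], (H2 n) as [k2 [A2 B2]].
  destruct (Nat.lt_trichotomy k1 k2) as [h | [h | h]].
  - rewrite B2 in A1 by auto. discriminate.
  - subst. congruence.
  - rewrite B1 in A2 by auto. discriminate.
Qed.

Lemma assoc_fun_continuous a p r n : assoc_fun a p r ->
  exists k, forall p' r', agree k p p' -> assoc_fun a p' r' -> r' n = r n.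
Proof.
  intros H. destruct (H n) as [k [A Z]]. exists k. intros p' r' E H'.
  destruct (H' n) as [k' [A' Z']].
  assert (Ej : forall j, j <= k -> prefix p j = prefix p' j)
    by (intros j hj; apply prefix_agree; intros i hi; apply E; lia).
  destruct (Nat.lt_trichotomy k' k) as [h | [h | h]].
  - rewrite <- Ej, Z in A' by lia. discriminate.
  - subst. rewrite <- Ej in A' by lia. congruence.
  - specialize (Z' k h). rewrite <- Ej in Z' by lia. congruence.
Qed.

Definition code_take c len : nat := code_build (code_nth c) len.

Lemma code_take_prefix p k len : len <= k -> code_take (code (prefix p k)) len = code (prefix p len).
Proof.
  intros h. unfold code_take. rewrite code_build_code. f_equal.
  apply map_ext_in. intros i hi. apply in_seq in hi. rewrite code_nth_code, nth_prefix by lia. auto.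
Qed.

(* With [c] the code of a prefix of [p] and [a1] an associate of [p |-> q],
   [probe a1 c j] is [S (q j)] if [q j] is already determined by [c], else [0].
   [comp_step ... len] is [1] if the prefix of [q] of length [len] is not yet
   determined, and otherwise the answer of [a2] on it, shifted up if nonzero;
   [acomp] takes the first nonzero step and subtracts one, so it answers [0]
   ("not yet") before it would use an undetermined part of [q]. *)
Definition probe (a1 : nat -> nat) c j : nat :=
  firstnz (fun len => a1 (to_nat (j, code_take c len))) (S (code_len c)).
Definition probes_defined a1 c len : nat := ifz (firstnz (fun j => ifz (probe a1 c j) 1 0) len) 1 0.
Definition probe_prefix a1 c len : nat := code_build (fun j => pred (probe a1 c j)) len.
Definition comp_step a1 a2 n c len : nat :=
  ifz (probes_defined a1 c len) 1
    (ifz (a2 (to_nat (n, probe_prefix a1 c len))) 0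
       (S (a2 (to_nat (n, probe_prefix a1 c len))))).
Definition acomp (a1 a2 : nat -> nat) (m : nat) : nat :=
  pred (firstnz (comp_step a1 a2 (unpair1 m) (unpair2 m)) (S (code_len (unpair2 m)))).

Section Composition.

Variables (a1 a2 : nat -> nat) (p q r : B).
Hypotheses (H1 : assoc_fun a1 p q) (H2 : assoc_fun a2 q r).

Lemma probe_spec j : exists kj, forall k,
  probe a1 (code (prefix p k)) j = if kj <? S k then S (q j) else 0.
Proof.
  destruct (H1 j) as [kj [A Z]]. exists kj. intros k.
  unfold probe. rewrite code_len_code, length_prefix.
  rewrite (firstnz_ext _ (fun len => a1 (to_nat (j, code (prefix p len))))).
  - rewrite (firstnz_first _ kj), A; auto. rewrite A. discriminate.
  - intros len h. rewrite code_take_prefix by lia. auto.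
Qed.

Lemma probe_cases k j :
  probe a1 (code (prefix p k)) j = 0 \/ probe a1 (code (prefix p k)) j = S (q j).
Proof. destruct (probe_spec j) as [kj E]. rewrite E. destruct (kj <? S k); auto. Qed.

Lemma probes_eventually len : exists K, len <= K /\
  forall j, j < len -> probe a1 (code (prefix p K)) j = S (q j).
Proof.
  induction len as [|len [K [hK HK]]]; [exists 0; split; [auto | lia]|].
  destruct (probe_spec len) as [kl El].
  exists (S (K + kl)). split; [lia|]. intros j hj.
  destruct (Nat.eq_dec j len) as [-> | nj].
  - rewrite El. replace (kl <? S (S (K + kl))) with true by (symmetry; apply Nat.ltb_lt; lia).
    reflexivity.
  - destruct (probe_spec j) as [kj Ej]. specialize (HK j ltac:(lia)). rewrite Ej in *.
    destruct (Nat.ltb_spec kj (S K)); [|discriminate].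
    replace (kj <? S (S (K + kl))) with true by (symmetry; apply Nat.ltb_lt; lia). auto.
Qed.

Lemma probes_defined_iff k len : probes_defined a1 (code (prefix p k)) len <> 0 <->
  forall j, j < len -> probe a1 (code (prefix p k)) j <> 0.
Proof.
  unfold probes_defined.
  destruct (firstnz_spec (fun j => ifz (probe a1 (code (prefix p k)) j) 1 0) len)
    as [[E1 E2] | [i [E1 [E2 [E3 E4]]]]].
  - rewrite E1. split; [|simpl; lia]. intros _ j hj Z. specialize (E2 j hj). cbv beta in E2.
    rewrite Z in E2. discriminate.
  - rewrite E4. cbv beta in *. destruct (probe a1 (code (prefix p k)) i) eqn:Pi; [|now exfalso].
    split; [simpl; lia|]. intros h. exfalso. apply (h i E1 Pi).
Qed.

Lemma comp_step_defined n k len : probes_defined a1 (code (prefix p k)) len <> 0 ->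
  comp_step a1 a2 n (code (prefix p k)) len =
  ifz (a2 (to_nat (n, code (prefix q len)))) 0 (S (a2 (to_nat (n, code (prefix q len))))).
Proof.
  intros h. unfold comp_step.
  assert (E : probe_prefix a1 (code (prefix p k)) len = code (prefix q len)).
  { rewrite probes_defined_iff in h. unfold probe_prefix. rewrite code_build_code. f_equal.
    apply map_ext_in. intros j hj. apply in_seq in hj. specialize (h j ltac:(lia)).
    destruct (probe_cases k j) as [e | e]; rewrite e in *; [lia | reflexivity]. }
  rewrite E. destruct (probes_defined a1 (code (prefix p k)) len); [lia | reflexivity].
Qed.

Lemma probes_defined_mono k len len' : len <= len' ->
  probes_defined a1 (code (prefix p k)) len' <> 0 -> probes_defined a1 (code (prefix p k)) len <> 0.
Proof. rewrite !probes_defined_iff. intros hl h j hj. apply h. lia. Qed.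

Let V n k := acomp a1 a2 (to_nat (n, code (prefix p k))).

Lemma acomp_prefix n k : V n k = pred (firstnz (comp_step a1 a2 n (code (prefix p k))) (S k)).
Proof. unfold V, acomp. rewrite unpair1_to_nat, unpair2_to_nat, code_len_code, length_prefix. auto. Qed.

Lemma acomp_cases n k : V n k = 0 \/ V n k = S (r n).
Proof.
  destruct (H2 n) as [L0 [A0 Z0]].
  rewrite acomp_prefix. destruct (firstnz_spec (comp_step a1 a2 n (code (prefix p k))) (S k))
    as [[E1 _] | [i [_ [E2 [E3 E4]]]]]; [rewrite E1; auto|].
  rewrite E4. destruct (Nat.eq_dec (probes_defined a1 (code (prefix p k)) i) 0) as [D | D].
  - unfold comp_step. rewrite D. auto.
  - rewrite comp_step_defined by auto. destruct (Nat.lt_trichotomy i L0) as [hi | [-> | hi]].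
    + rewrite Z0 by auto. auto.
    + rewrite A0. auto.
    + exfalso. assert (E5 := E3 L0 hi).
      rewrite comp_step_defined, A0 in E5 by (apply (probes_defined_mono k L0 i); auto; lia).
      discriminate.
Qed.

Lemma acomp_eventually n : exists K, V n K = S (r n).
Proof.
  destruct (H2 n) as [L0 [A0 Z0]].
  destruct (probes_eventually L0) as [K [hK HK]]. exists K.
  assert (D : probes_defined a1 (code (prefix p K)) L0 <> 0)
    by (apply probes_defined_iff; intros j hj; rewrite HK; auto).
  rewrite acomp_prefix. destruct (firstnz_spec (comp_step a1 a2 n (code (prefix p K))) (S K))
    as [[_ E2] | [i [_ [E2 [E3 E4]]]]].
  - exfalso. specialize (E2 L0 ltac:(lia)). rewrite comp_step_defined, A0 in E2 by auto. discriminate.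
  - rewrite E4. destruct (Nat.lt_trichotomy i L0) as [hi | [-> | hi]].
    + exfalso. apply E2. rewrite comp_step_defined by (apply (probes_defined_mono K i L0); auto; lia).
      rewrite Z0 by auto. reflexivity.
    + rewrite comp_step_defined, A0 by auto. reflexivity.
    + exfalso. specialize (E3 L0 hi). rewrite comp_step_defined, A0 in E3 by auto. discriminate.
Qed.

Lemma acomp_spec : assoc_fun (acomp a1 a2) p r.
Proof.
  intros n. destruct (acomp_eventually n) as [K HK].
  destruct (least_nonzero (V n) K) as [k [Hk Z]]; [rewrite HK; discriminate|].
  exists k. split; [destruct (acomp_cases n k); [contradiction | auto] | apply Z].
Qed.

End Composition.

Definition ECodeTake c len : exp := EBuild len (ECodeNth (lift 0 1 c) (Var 0)).
Definition EProbe a1 (H1 : computable_nat a1) c j : exp :=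
  EFirst (Succ (ECodeLen c)) (Fn a1 H1 (EToNat (lift 0 1 j) (ECodeTake (lift 0 1 c) (Var 0)))).
Definition EProbesDefined a1 H1 c len : exp :=
  EIfz (EFirst len (EIfz (EProbe a1 H1 (lift 0 1 c) (Var 0)) (EConst 1) Zero)) (EConst 1) Zero.
Definition EProbePrefix a1 H1 c len : exp := EBuild len (EPred (EProbe a1 H1 (lift 0 1 c) (Var 0))).
Definition ECompStep a1 H1 a2 H2 n c len : exp :=
  EIfz (EProbesDefined a1 H1 c len) (EConst 1)
    (EIfz (Fn a2 H2 (EToNat n (EProbePrefix a1 H1 c len))) Zero
       (Succ (Fn a2 H2 (EToNat n (EProbePrefix a1 H1 c len))))).

Lemma eval_ECodeTake c len env : eval (ECodeTake c len) env = code_take (eval c env) (eval len env).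
Proof. unfold ECodeTake. ev. reflexivity. Qed.
Hint Rewrite eval_ECodeTake : eval_db.
Lemma eval_EProbe a1 H1 c j env : eval (EProbe a1 H1 c j) env = probe a1 (eval c env) (eval j env).
Proof. unfold EProbe. ev. reflexivity. Qed.
Hint Rewrite eval_EProbe : eval_db.
Lemma eval_EProbesDefined a1 H1 c len env :
  eval (EProbesDefined a1 H1 c len) env = probes_defined a1 (eval c env) (eval len env).
Proof. unfold EProbesDefined. ev. reflexivity. Qed.
Lemma eval_EProbePrefix a1 H1 c len env :
  eval (EProbePrefix a1 H1 c len) env = probe_prefix a1 (eval c env) (eval len env).
Proof. unfold EProbePrefix. ev. reflexivity. Qed.
Hint Rewrite eval_EProbesDefined eval_EProbePrefix : eval_db.
Lemma eval_ECompStep a1 H1 a2 H2 n c len env :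
  eval (ECompStep a1 H1 a2 H2 n c len) env = comp_step a1 a2 (eval n env) (eval c env) (eval len env).
Proof. unfold ECompStep. ev. reflexivity. Qed.
Hint Rewrite eval_ECompStep : eval_db.

Lemma computable_acomp a1 a2 : computable_nat a1 -> computable_nat a2 -> computable_nat (acomp a1 a2).
Proof.
  intros H1 H2. apply (computable_eval (EPred (EFirst (Succ (ECodeLen (EUnpair2 (Var 0))))
    (ECompStep a1 H1 a2 H2 (EUnpair1 (Var 1)) (EUnpair2 (Var 1)) (Var 0))))).
  intros m. ev. reflexivity.
Qed.

Definition computable2 (phi : nat -> nat -> nat) : Prop :=
  computable_nat (fun m => phi (unpair1 m) (unpair2 m)).

Definition pointwise (sigma : nat -> nat) (phi : nat -> nat -> nat) (p : B) : B :=
  fun n => phi n (p (sigma n)).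

Definition amap (sigma : nat -> nat) (phi : nat -> nat -> nat) (m : nat) : nat :=
  ifz (ltbf (sigma (unpair1 m)) (code_len (unpair2 m))) 0
    (S (phi (unpair1 m) (code_nth (unpair2 m) (sigma (unpair1 m))))).

Lemma amap_spec sigma phi p : assoc_fun (amap sigma phi) p (pointwise sigma phi p).
Proof.
  intros n. exists (S (sigma n)). unfold amap.
  rewrite unpair1_to_nat, unpair2_to_nat, code_len_code, length_prefix, ltbf_spec.
  split.
  - replace (sigma n <? S (sigma n)) with true by (symmetry; apply Nat.ltb_lt; lia).
    cbn [ifz]. rewrite code_nth_code, nth_prefix by lia. reflexivity.
  - intros j hj. rewrite unpair1_to_nat, unpair2_to_nat, code_len_code, length_prefix, ltbf_spec.
    replace (sigma n <? j) with false by (symmetry; apply Nat.ltb_ge; lia). reflexivity.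
Qed.

Lemma computable_amap sigma phi : computable_nat sigma -> computable2 phi ->
  computable_nat (amap sigma phi).
Proof.
  intros Hs Hp. apply (computable_eval
    (EIfz (ELtb (Fn sigma Hs (EUnpair1 (Var 0))) (ECodeLen (EUnpair2 (Var 0)))) Zero
      (Succ (Fn _ Hp (EToNat (EUnpair1 (Var 0))
                         (ECodeNth (EUnpair2 (Var 0)) (Fn sigma Hs (EUnpair1 (Var 0))))))))).
  intros m. ev. rewrite unpair1_to_nat, unpair2_to_nat. reflexivity.
Qed.

Lemma even_or_odd n : exists a, n = 2 * a \/ n = S (2 * a).
Proof.
  induction n as [|n [a [-> | ->]]]; [exists 0; auto | exists a; auto | exists (S a); left; lia].
Qed.

Lemma bjoin_even p s a : bjoin p s (2 * a) = p a.
Proof. unfold bjoin. rewrite Nat.even_mul, Nat.div2_double. reflexivity. Qed.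
Lemma bjoin_odd p s a : bjoin p s (S (2 * a)) = s a.
Proof.
  unfold bjoin. rewrite Nat.even_succ, Nat.odd_mul, Nat.div2_succ_double. reflexivity.
Qed.

Lemma bjoin_agree p p' s s' k : agree k p p' -> agree k s s' -> agree k (bjoin p s) (bjoin p' s').
Proof.
  intros Hp Hs i hi. destruct (even_or_odd i) as [a [-> | ->]].
  - rewrite !bjoin_even. apply Hp. lia.
  - rewrite !bjoin_odd. apply Hs. lia.
Qed.

Definition apair (a1 a2 : nat -> nat) (m : nat) : nat :=
  ifz (oddf (unpair1 m)) (a1 (to_nat (div2f (unpair1 m), unpair2 m)))
    (a2 (to_nat (div2f (unpair1 m), unpair2 m))).

Lemma apair_spec a1 a2 p q1 q2 : assoc_fun a1 p q1 -> assoc_fun a2 p q2 ->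
  assoc_fun (apair a1 a2) p (bjoin q1 q2).
Proof.
  intros H1 H2 n. unfold apair. setoid_rewrite unpair1_to_nat. setoid_rewrite unpair2_to_nat.
  rewrite oddf_spec, div2f_spec. destruct (even_or_odd n) as [a [-> | ->]].
  - rewrite Nat.even_mul, Nat.div2_double, bjoin_even. apply H1.
  - rewrite Nat.even_succ, Nat.odd_mul, Nat.div2_succ_double, bjoin_odd. apply H2.
Qed.

Lemma computable_apair a1 a2 : computable_nat a1 -> computable_nat a2 -> computable_nat (apair a1 a2).
Proof.
  intros H1 H2. apply (computable_eval (EIfz (EOdd (EUnpair1 (Var 0)))
    (Fn a1 H1 (EToNat (EDiv2 (EUnpair1 (Var 0))) (EUnpair2 (Var 0))))
    (Fn a2 H2 (EToNat (EDiv2 (EUnpair1 (Var 0))) (EUnpair2 (Var 0)))))).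
  intros m. ev. reflexivity.
Qed.

Definition code_cnt c j : nat := count_nz (code_nth c) j.

Lemma code_cnt_prefix t k j : j <= k -> code_cnt (code (prefix t k)) j = cnt t j.
Proof.
  induction j; intros h; [reflexivity|]. unfold code_cnt in *.
  rewrite count_nz_S, IHj, code_nth_code, nth_prefix by lia. simpl. destruct (t j); reflexivity.
Qed.

Lemma cnt_injective t a b : 0 < t a -> 0 < t b -> cnt t a = cnt t b -> a = b.
Proof.
  intros Ha Hb E. destruct (Nat.lt_trichotomy a b) as [h | [h | h]]; auto.
  - pose proof (cnt_mono t (S a) b h). rewrite cnt_pos in * by auto. lia.
  - pose proof (cnt_mono t (S b) a h). rewrite cnt_pos in * by auto. lia.
Qed.

(* [minus1 t w] puts [w i + 1] at the unique [m] with [t m > 0] and [cnt t m = i];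
   [aminus1] searches the given prefix for that [m]. *)
Definition aminus1 (m : nat) : nat :=
  firstnz (fun j => ifz (code_nth (unpair2 m) j) 0
                      (ifz (eqbf (code_cnt (unpair2 m) j) (unpair1 m)) 0 (code_nth (unpair2 m) j)))
    (code_len (unpair2 m)).

Lemma aminus1_spec t w : minus1 t w -> assoc_fun aminus1 t w.
Proof.
  intros H i. destruct (H i) as [m0 [P0 [C0 W0]]].
  set (e := fun j => ifz (t j) 0 (ifz (eqbf (cnt t j) i) 0 (t j))).
  assert (He0 : e m0 = t m0).
  { unfold e. rewrite eqbf_spec, C0, Nat.eqb_refl. destruct (t m0); [lia | reflexivity]. }
  assert (He : forall j, j < m0 -> e j = 0).
  { intros j hj. unfold e. rewrite eqbf_spec. destruct (t j) eqn:Tj; [reflexivity|].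
    destruct (Nat.eqb_spec (cnt t j) i); [|reflexivity].
    assert (j = m0) by (apply cnt_injective with t; lia). lia. }
  assert (Hv : forall k, aminus1 (to_nat (i, code (prefix t k))) = if m0 <? k then t m0 else 0).
  { intros k. unfold aminus1. rewrite unpair1_to_nat, unpair2_to_nat, code_len_code, length_prefix.
    rewrite (firstnz_ext _ e), (firstnz_first e m0), He0; auto; [lia|].
    intros j hj. unfold e. rewrite code_nth_code, nth_prefix, code_cnt_prefix by lia. reflexivity. }
  exists (S m0). rewrite Hv. split.
  - replace (m0 <? S m0) with true by (symmetry; apply Nat.ltb_lt; lia). lia.
  - intros j hj. rewrite Hv. replace (m0 <? j) with false by (symmetry; apply Nat.ltb_ge; lia). auto.
Qed.

Definition ECodeCnt c j : exp := ECount j (ECodeNth (lift 0 1 c) (Var 0)).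

Lemma eval_ECodeCnt c j env : eval (ECodeCnt c j) env = code_cnt (eval c env) (eval j env).
Proof. unfold ECodeCnt. ev. reflexivity. Qed.
Hint Rewrite eval_ECodeCnt : eval_db.

Lemma computable_aminus1 : computable_nat aminus1.
Proof.
  apply (computable_eval (EFirst (ECodeLen (EUnpair2 (Var 0)))
     (EIfz (ECodeNth (EUnpair2 (Var 1)) (Var 0)) Zero
        (EIfz (EEqb (ECodeCnt (EUnpair2 (Var 1)) (Var 0)) (EUnpair1 (Var 1))) Zero
           (ECodeNth (EUnpair2 (Var 1)) (Var 0)))))).
  intros m. ev. reflexivity.
Qed.

Definition tracks (a : nat -> nat) (R : B -> B -> Prop) : Prop :=
  forall p q, R p q -> assoc_fun a p q.

Definition computable_rel (R : B -> B -> Prop) : Prop :=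
  exists a, computable_nat a /\ tracks a R.

Definition rcomp (R1 R2 : B -> B -> Prop) : B -> B -> Prop :=
  fun p r => exists q, R1 p q /\ R2 q r.
Definition rpair (R1 R2 : B -> B -> Prop) : B -> B -> Prop :=
  fun p q => exists q1 q2, R1 p q1 /\ R2 p q2 /\ q = bjoin q1 q2.
Definition graph (F : B -> B) : B -> B -> Prop := fun p q => q = F p.

Lemma computable_rel_assoc a : computable_nat a -> computable_rel (assoc_fun a).
Proof. intros Ha. exists a. split; [auto | intros p q; auto]. Qed.

Lemma computable_rel_comp R1 R2 : computable_rel R1 -> computable_rel R2 ->
  computable_rel (rcomp R1 R2).
Proof.
  intros [a1 [C1 T1]] [a2 [C2 T2]]. exists (acomp a1 a2). split; [apply computable_acomp; auto|].
  intros p r [q [Hq Hr]]. apply acomp_spec with q; auto.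
Qed.

Lemma computable_rel_pair R1 R2 : computable_rel R1 -> computable_rel R2 ->
  computable_rel (rpair R1 R2).
Proof.
  intros [a1 [C1 T1]] [a2 [C2 T2]]. exists (apair a1 a2). split; [apply computable_apair; auto|].
  intros p q [q1 [q2 [Hq1 [Hq2 ->]]]]. apply apair_spec; auto.
Qed.

Lemma computable_rel_pointwise sigma phi : computable_nat sigma -> computable2 phi ->
  computable_rel (graph (pointwise sigma phi)).
Proof.
  intros Hs Hp. exists (amap sigma phi). split; [apply computable_amap; auto|].
  intros p q ->. apply amap_spec.
Qed.

Lemma computable_rel_minus1 : computable_rel minus1.
Proof. exists aminus1. split; [apply computable_aminus1 | exact aminus1_spec]. Qed.

Definition bfst (z : B) : B := fun n => z (2 * n).
Definition bsnd (z : B) : B := fun n => z (S (2 * n)).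
Definition shift1 (s : B) : B := fun n => S (s n).
Definition graft (p0 : B) (k : nat) (p : B) : B := fun i => if i <? k then p0 i else p i.

Lemma bfst_bjoin p s : bfst (bjoin p s) = p.
Proof. extensionality n. apply bjoin_even. Qed.
Lemma bsnd_bjoin p s : bsnd (bjoin p s) = s.
Proof. extensionality n. apply bjoin_odd. Qed.

Lemma computable_unpair2 : computable2 (fun _ v => v).
Proof. apply (computable_eval (EUnpair2 (Var 0))). intros m. ev. reflexivity. Qed.

Lemma computable_rel_id : computable_rel (graph (fun s => s)).
Proof.
  apply (computable_rel_pointwise (fun n => n) (fun _ v => v)); [|apply computable_unpair2].
  apply (computable_eval (Var 0)). reflexivity.
Qed.

Lemma computable_rel_bfst : computable_rel (graph bfst).
Proof.
  apply (computable_rel_pointwise (fun n => 2 * n) (fun _ v => v)); [|apply computable_unpair2].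
  apply (computable_eval (EAdd (Var 0) (EAdd (Var 0) Zero))). intros m. ev. reflexivity.
Qed.

Lemma computable_rel_bsnd : computable_rel (graph bsnd).
Proof.
  apply (computable_rel_pointwise (fun n => S (2 * n)) (fun _ v => v)); [|apply computable_unpair2].
  apply (computable_eval (Succ (EAdd (Var 0) (EAdd (Var 0) Zero)))). intros m. ev. reflexivity.
Qed.

Lemma computable_rel_shift1 : computable_rel (graph shift1).
Proof.
  apply (computable_rel_pointwise (fun n => n) (fun _ v => S v)).
  - apply (computable_eval (Var 0)). reflexivity.
  - apply (computable_eval (Succ (EUnpair2 (Var 0)))). intros m. ev. reflexivity.
Qed.

Lemma computable_rel_graft p0 k : computable_rel (graph (graft p0 k)).
Proof.
  set (cs := code (prefix p0 k)).
  replace (graft p0 k) with (pointwise (fun n => n) (fun i v => ifz (ltbf i k) v (code_nth cs i))).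
  - apply computable_rel_pointwise.
    + apply (computable_eval (Var 0)). reflexivity.
    + apply (computable_eval (EIfz (ELtb (EUnpair1 (Var 0)) (EConst k)) (EUnpair2 (Var 0))
                                   (ECodeNth (EConst cs) (EUnpair1 (Var 0))))).
      intros m. ev. reflexivity.
  - extensionality p. extensionality i. unfold pointwise, graft. rewrite ltbf_spec.
    destruct (Nat.ltb_spec i k); auto. unfold cs. cbn [ifz]. rewrite code_nth_code, nth_prefix; auto.
Qed.

Definition reduces_via {X Y U V : rep} (h : problem X Y) (g : problem U V)
    (H K : B -> B -> Prop) : Prop :=
  forall G, partial_fun G -> realizes G g ->
    realizes (fun p r => exists q s, K p q /\ G q s /\ H (bjoin p s) r) h.

Lemma weihrauch_intro {X Y U V : rep} (h : problem X Y) (g : problem U V) H K :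
  computable_rel H -> computable_rel K -> reduces_via h g H K -> weihrauch h g.
Proof.
  intros [aH [cH tH]] [aK [cK tK]] W.
  exists (assoc_fun aH), (assoc_fun aK). split; [exists aH; auto|]. split; [exists aK; auto|].
  intros G pG rG p x Hp Hd. destruct (W G pG rG p x Hp Hd) as [r [y [[q [s [Kq [Gs Hr]]]] Hy]]].
  exists r, y. split; auto. exists q, s. auto.
Qed.

Lemma weihrauch_elim {X Y U V : rep} (h : problem X Y) (g : problem U V) :
  weihrauch h g -> exists aH aK, computable_nat aH /\ computable_nat aK /\
    reduces_via h g (assoc_fun aH) (assoc_fun aK).
Proof. intros [H [K [[aH [cH ->]] [[aK [cK ->]] W]]]]. exists aH, aK. auto. Qed.

Definition override (G : B -> B -> Prop) (t s0 : B) : B -> B -> Prop :=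
  fun q s => (q = t /\ s = s0) \/ (q <> t /\ G q s).

Lemma override_partial_fun G t s0 : partial_fun G -> partial_fun (override G t s0).
Proof. intros H q s1 s2 [[-> ->] | [h1 h2]] [[e ->] | [h3 h4]]; eauto; contradiction. Qed.

Lemma override_realizes {U V : rep} (g : problem U V) G t s0 : realizes G g ->
  (forall x, delta U t x -> dom g x -> exists y, delta V s0 y /\ g x y) ->
  realizes (override G t s0) g.
Proof.
  intros HG Ht p x Hp Hd. destruct (classic (p = t)) as [-> | e].
  - destruct (Ht x Hp Hd) as [y [h1 h2]]. exists s0, y. split; auto. left; auto.
  - destruct (HG p x Hp Hd) as [q [y [h1 [h2 h3]]]]. exists q, y. split; auto. right; auto.
Qed.

Definition correct_answer {U V : rep} (g : problem U V) (q s : B) : Prop :=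
  exists u v, delta U q u /\ g u v /\ delta V s v.

Definition canonical_realizer {U V : rep} (g : problem U V) : B -> B -> Prop :=
  fun q s => correct_answer g q s /\
             s = epsilon (inhabits (fun _ : nat => 0)) (correct_answer g q).

Lemma canonical_realizer_partial_fun {U V : rep} (g : problem U V) :
  partial_fun (canonical_realizer g).
Proof. intros q s1 s2 [_ ->] [_ ->]. auto. Qed.

Lemma canonical_realizer_realizes {U V : rep} (g : problem U V) :
  realizes (canonical_realizer g) g.
Proof.
  intros p x Hp [v Hv]. destruct (delta_surj V v) as [s Hs].
  assert (E : exists s, correct_answer g p s) by (exists s, x, v; auto).
  pose proof (epsilon_spec (inhabits (fun _ : nat => 0)) _ E) as Sp.
  destruct Sp as [u [v' [h1 [h2 h3]]]]. pose proof (delta_fun U p x u Hp h1). subst.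
  do 2 eexists. split; [|split; eauto]. split; [exists u, v'; auto | reflexivity].
Qed.

Lemma canonical_realizer_name {U V : rep} (g : problem U V) q s :
  canonical_realizer g q s -> exists v, delta V s v.
Proof. intros [[u [v [_ [_ h]]]] _]. eauto. Qed.

Lemma reduces_via_run {X Y U V : rep} (h : problem X Y) (g : problem U V) H K G p x :
  reduces_via h g H K -> partial_fun G -> realizes G g -> delta X p x -> dom h x ->
  exists t s r y, K p t /\ G t s /\ H (bjoin p s) r /\ delta Y r y /\ h x y.
Proof.
  intros W HG RG Hp Hd. destruct (W G HG RG p x Hp Hd) as [r [y [[t [s [h1 [h2 h3]]]] [h4 h5]]]].
  exists t, s, r, y. auto.
Qed.

Lemma reduces_via_answer {X Y U V : rep} (h : problem X Y) (g : problem U V) aH aK G p x t s :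
  reduces_via h g (assoc_fun aH) (assoc_fun aK) -> partial_fun G -> realizes G g ->
  delta X p x -> dom h x -> assoc_fun aK p t -> G t s ->
  exists r y, assoc_fun aH (bjoin p s) r /\ delta Y r y /\ h x y.
Proof.
  intros W HG RG Hp Hd Kt Gt.
  destruct (reduces_via_run h g _ _ G p x W HG RG Hp Hd) as [t' [s' [r [y [K' [G' [Hr Hy]]]]]]].
  rewrite (assoc_fun_functional _ _ _ _ K' Kt) in G'. rewrite (HG _ _ _ G' Gt) in Hr.
  exists r, y. auto.
Qed.

Lemma reduces_via_answer_override {X Y U V : rep} (h : problem X Y) (g : problem U V) aH aK
    p x t s :
  reduces_via h g (assoc_fun aH) (assoc_fun aK) ->
  realizes (override (canonical_realizer g) t s) g ->
  delta X p x -> dom h x -> assoc_fun aK p t ->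
  exists r y, assoc_fun aH (bjoin p s) r /\ delta Y r y /\ h x y.
Proof.
  intros W R Hp Hd Kt. apply (reduces_via_answer h g aH aK (override (canonical_realizer g) t s)
    p x t s W (override_partial_fun _ _ _ (canonical_realizer_partial_fun g)) R Hp Hd Kt).
  left. auto.
Qed.

Lemma to_nat_ge n j : n <= to_nat (n, j).
Proof. pose proof (to_nat_non_decreasing n j). lia. Qed.

Definition const_limit (q : B) : B := fun m => q (snd (of_nat m)).

Lemma jump_name_const_limit (X : rep) q x : delta X q x -> delta (jump_rep X) (const_limit q) x.
Proof.
  intros H. exists q. split; auto. intros j. exists 0. intros n _.
  unfold const_limit. rewrite cancel_of_to. reflexivity.
Qed.

Lemma jump_name_graft (X : rep) p0 k p x :
  delta (jump_rep X) p x -> delta (jump_rep X) (graft p0 k p) x.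
Proof.
  intros [q [L D]]. exists q. split; auto. intros j. destruct (L j) as [N HN]. exists (N + k).
  intros n hn. unfold graft. pose proof (to_nat_ge n j).
  replace (to_nat (n, j) <? k) with false by (symmetry; apply Nat.ltb_ge; lia). apply HN. lia.
Qed.

Lemma graft_agree p0 k p : agree k (graft p0 k p) p0.
Proof.
  intros i hi. unfold graft. replace (i <? k) with true by (symmetry; apply Nat.ltb_lt; auto). auto.
Qed.

Lemma cdelta_total (V : rep) s : exists o, cdelta V s o.
Proof.
  destruct (classic (exists q x, minus1 s q /\ delta V q x)) as [[q [x [h1 h2]]] | h].
  - exists (Some x). exists q. auto.
  - exists None. exact h.
Qed.

Lemma minus1_shift1 t : minus1 (shift1 t) t.
Proof.
  assert (C : forall n, cnt (shift1 t) n = n) by (induction n; simpl; auto; rewrite IHn; simpl; lia).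
  intros i. exists i. unfold shift1 at 1 3. rewrite C. split; [lia | split; [auto | lia]].
Qed.

(* [k] blanks followed by the completion name of [w] *)
Definition pad (k : nat) (w : B) : B := fun i => if i <? k then 0 else S (w (i - k)).

Lemma minus1_pad k w : minus1 (pad k w) w.
Proof.
  assert (C0 : forall j, j <= k -> cnt (pad k w) j = 0).
  { induction j; intros h; simpl; auto. rewrite IHj by lia. unfold pad.
    replace (j <? k) with true by (symmetry; apply Nat.ltb_lt; lia). reflexivity. }
  assert (C : forall i, cnt (pad k w) (i + k) = i).
  { induction i; [apply C0; auto|]. replace (S i + k) with (S (i + k)) by lia. simpl.
    rewrite IHi. unfold pad. replace (i + k <? k) with false by (symmetry; apply Nat.ltb_ge; lia).
    simpl. lia. }
  intros i. exists (i + k). unfold pad at 1 3.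
  replace (i + k <? k) with false by (symmetry; apply Nat.ltb_ge; lia).
  replace (i + k - k) with i by lia. split; [lia | split; [apply C | lia]].
Qed.

Lemma pad_agree k w : agree k (pad k w) (fun _ => 0).
Proof.
  intros i hi. unfold pad. replace (i <? k) with true by (symmetry; apply Nat.ltb_lt; auto). auto.
Qed.

Lemma weihrauch_totalization {X Y U V : rep} (h : problem X Y) (g : problem U V) :
  weihrauch h g -> weihrauch h (totalization g).
Proof.
  intros [H [K [cH [cK W]]]]. exists H, K. split; auto. split; auto. intros G pG rG. apply W; auto.
  intros p x Hp [v Hv]. destruct (rG p x Hp) as [q [y [h1 [h2 h3]]]].
  - exists v. intros _. auto.
  - exists q, y. repeat split; auto. apply h3. exists v; auto.
Qed.

(* The query is sent to the completion with every symbol shifted by one; the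
   answer, which then names an element of [V], is shifted back. *)
Lemma weihrauch_pcompletion {X Y U V : rep} (h : problem X Y) (g : problem U V) :
  weihrauch h g -> weihrauch h (pcompletion g).
Proof.
  intros Hw. destruct (weihrauch_elim h g Hw) as [aH [aK [caH [caK W]]]].
  apply (weihrauch_intro h (pcompletion g)
    (rcomp (rpair (graph bfst) (rcomp (graph bsnd) minus1)) (assoc_fun aH))
    (rcomp (assoc_fun aK) (graph shift1))).
  { apply computable_rel_comp; [|apply computable_rel_assoc; auto].
    apply computable_rel_pair; [apply computable_rel_bfst|].
    apply computable_rel_comp; [apply computable_rel_bsnd | apply computable_rel_minus1]. }
  { apply computable_rel_comp; [apply computable_rel_assoc; auto | apply computable_rel_shift1]. }
  intros G pG rG p x Hp Hd.
  destruct (reduces_via_run h g _ _ (canonical_realizer g) p x W (canonical_realizer_partial_fun g)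
              (canonical_realizer_realizes g) Hp Hd)
    as [t [s0 [r0 [y0 [Kt [[[u [v0 [Hu [Hg Hv0]]]] _] _]]]]]].
  assert (Hc : cdelta U (shift1 t) (Some u)) by (exists t; split; [apply minus1_shift1 | auto]).
  destruct (rG _ (Some u) Hc) as [s' [o [Gs [Ho Hgo]]]].
  { exists (Some v0). intros u' e _. injection e as <-. eauto. }
  destruct (Hgo u eq_refl (ex_intro _ v0 Hg)) as [v [-> Hgv]].
  destruct Ho as [s [Hm Hs]].
  assert (Ro : realizes (override (canonical_realizer g) t s) g).
  { apply override_realizes; [apply canonical_realizer_realizes|]. intros x' Hx' _.
    rewrite (delta_fun U t x' u Hx' Hu). eauto. }
  destruct (reduces_via_answer_override h g aH aK p x t s W Ro Hp Hd Kt) as [r [y [Hr [Hy Hh]]]].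
  exists r, y. split; auto. exists (shift1 t), s'. split; [exists t; split; auto; reflexivity|].
  split; auto. exists (bjoin p s). split; auto.
  exists p, s. split; [unfold graph; rewrite bfst_bjoin; auto|]. split; auto.
  exists s'. split; auto. unfold graph. rewrite bsnd_bjoin. auto.
Qed.

(** * Reductions that query [dom g] on a cylinder *)

Definition names_dom {U V : rep} (g : problem U V) (t : B) : Prop :=
  exists u, delta U t u /\ dom g u.
Definition names_dom_completion {U V : rep} (g : problem U V) (t : B) : Prop :=
  exists u, delta (completion U) t (Some u) /\ dom g u.

(* [H] run on the input with its first [k] symbols replaced by those of [p0],
   and on the answer transformed by [R] *)
Definition graft_answer (p0 : B) (k : nat) (R : B -> B -> Prop) (aH : nat -> nat)
    : B -> B -> Prop :=
  rcomp (rpair (rcomp (graph bfst) (graph (graft p0 k))) (rcomp (graph bsnd) R)) (assoc_fun aH).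

Lemma computable_rel_graft_answer p0 k R aH : computable_rel R -> computable_nat aH ->
  computable_rel (graft_answer p0 k R aH).
Proof.
  intros HR HaH. apply computable_rel_comp; [|apply computable_rel_assoc; auto].
  apply computable_rel_pair; apply computable_rel_comp; auto using computable_rel_bfst,
    computable_rel_graft, computable_rel_bsnd.
Qed.

Lemma graft_answer_intro p0 k R aH p s' s r : R s' s ->
  assoc_fun aH (bjoin (graft p0 k p) s) r -> graft_answer p0 k R aH (bjoin p s') r.
Proof.
  intros HR Hr. exists (bjoin (graft p0 k p) s). split; auto.
  exists (graft p0 k p), s. split; [|split; auto].
  - exists p. unfold graph. rewrite bfst_bjoin. auto.
  - exists s'. unfold graph. rewrite bsnd_bjoin. auto.
Qed.

Lemma weihrauch_of_totalization_on_cylinder {X Y U V : rep} (h : problem (jump_rep X) Y)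
    (g : problem U V) aH aK p0 k :
  computable_nat aH -> computable_nat aK ->
  reduces_via h (totalization g) (assoc_fun aH) (assoc_fun aK) ->
  (forall p x t, delta (jump_rep X) p x -> dom h x -> agree k p p0 ->
     assoc_fun aK p t -> names_dom g t) ->
  weihrauch h g.
Proof.
  intros caH caK W Hdom.
  apply (weihrauch_intro h g (graft_answer p0 k (graph (fun s => s)) aH)
                             (rcomp (graph (graft p0 k)) (assoc_fun aK))).
  { apply computable_rel_graft_answer; auto using computable_rel_id. }
  { apply computable_rel_comp; auto using computable_rel_graft, computable_rel_assoc. }
  intros G pG rG p x Hp Hd.
  set (ph := graft p0 k p). assert (Hph : delta (jump_rep X) ph x) by apply jump_name_graft, Hp.
  destruct (reduces_via_run h _ _ _ _ ph x W (canonical_realizer_partial_fun _)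
              (canonical_realizer_realizes _) Hph Hd) as [t [_ [_ [_ [Kt _]]]]].
  destruct (Hdom ph x t Hph Hd (graft_agree p0 k p) Kt) as [u [Hu Hdu]].
  destruct (rG t u Hu Hdu) as [s [v [Gs [Hs Hg]]]].
  assert (Ro : realizes (override (canonical_realizer (totalization g)) t s) (totalization g)).
  { apply override_realizes; [apply canonical_realizer_realizes|]. intros x' Hx' _.
    rewrite (delta_fun U t x' u Hx' Hu). exists v. split; [auto | intros _; auto]. }
  destruct (reduces_via_answer_override h _ aH aK ph x t s W Ro Hph Hd Kt) as [r [y [Hr [Hy Hh]]]].
  exists r, y. split; auto. exists t, s. split; [exists ph; split; auto; reflexivity|].
  split; auto. apply graft_answer_intro with s; auto. reflexivity.
Qed.

Lemma weihrauch_of_pcompletion_on_cylinder {X Y U V : rep} (h : problem (jump_rep X) Y)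
    (g : problem U V) aH aK p0 k :
  computable_nat aH -> computable_nat aK ->
  reduces_via h (pcompletion g) (assoc_fun aH) (assoc_fun aK) ->
  (forall p x t, delta (jump_rep X) p x -> dom h x -> agree k p p0 ->
     assoc_fun aK p t -> names_dom_completion g t) ->
  weihrauch h g.
Proof.
  intros caH caK W Hdom.
  apply (weihrauch_intro h g (graft_answer p0 k (graph shift1) aH)
                             (rcomp (rcomp (graph (graft p0 k)) (assoc_fun aK)) minus1)).
  { apply computable_rel_graft_answer; auto using computable_rel_shift1. }
  { repeat apply computable_rel_comp;
      auto using computable_rel_graft, computable_rel_assoc, computable_rel_minus1. }
  intros G pG rG p x Hp Hd.
  set (ph := graft p0 k p). assert (Hph : delta (jump_rep X) ph x) by apply jump_name_graft, Hp.
  destruct (reduces_via_run h _ _ _ _ ph x W (canonical_realizer_partial_fun _)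
              (canonical_realizer_realizes _) Hph Hd) as [t [_ [_ [_ [Kt _]]]]].
  destruct (Hdom ph x t Hph Hd (graft_agree p0 k p) Kt) as [u [Hu Hdu]].
  destruct Hu as [w [Hw Hwu]].
  destruct (rG w u Hwu Hdu) as [s [v [Gs [Hs Hg]]]].
  assert (Ro : realizes (override (canonical_realizer (pcompletion g)) t (shift1 s)) (pcompletion g)).
  { apply override_realizes; [apply canonical_realizer_realizes|]. intros x' Hx' _.
    assert (Hu' : delta (completion U) t (Some u)) by (exists w; auto).
    rewrite (delta_fun (completion U) t x' (Some u) Hx' Hu').
    exists (Some v). split; [exists s; split; auto; apply minus1_shift1|].
    intros u' e _. injection e as <-. eauto. }
  destruct (reduces_via_answer_override h _ aH aK ph x t (shift1 s) W Ro Hph Hd Kt)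
    as [r [y [Hr [Hy Hh]]]].
  exists r, y. split; auto. exists w, s.
  split; [exists t; split; auto; exists ph; split; auto; reflexivity|].
  split; auto. apply graft_answer_intro with (shift1 s); auto. reflexivity.
Qed.

(** * Continuity arguments *)

(* every answer to the query [t] is acceptable *)
Definition unconstrained_at {U V : rep} (g : problem U V) (t : B) : Prop :=
  forall s, (exists v, delta V s v) -> realizes (override (canonical_realizer g) t s) g.

Lemma override_pcompletion {U V : rep} (g : problem U V) t s : ~ names_dom_completion g t ->
  realizes (override (canonical_realizer (pcompletion g)) t s) (pcompletion g).
Proof.
  intros Hb. apply override_realizes; [apply canonical_realizer_realizes|]. intros x Hx _.
  destruct (cdelta_total V s) as [o Ho]. exists o. split; auto.
  intros u' -> Hd. exfalso. apply Hb. exists u'. auto.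
Qed.

Lemma names_dom_completion_of_constrained {U V : rep} (g : problem U V) t :
  ~ unconstrained_at (pcompletion g) t -> names_dom_completion g t.
Proof.
  intros Hc. apply NNPP. intros Hb. apply Hc. intros s _. apply override_pcompletion, Hb.
Qed.

Lemma names_dom_of_constrained {U V : rep} (g : problem U V) t :
  ~ unconstrained_at (totalization g) t -> names_dom g t.
Proof.
  intros Hc. apply NNPP. intros Hb. apply Hc. intros s [v Hv].
  apply override_realizes; [apply canonical_realizer_realizes|]. intros x Hx _.
  exists v. split; auto. intros Hd. exfalso. apply Hb. exists x. auto.
Qed.

(* Start from a name of [x1], then switch to a name of [x2] late enough that
   the first output symbol of the first run is already fixed. On the
   resulting cylinder a query that accepted every answer could be given the
   answers of both runs, producing both [f x1] and [f x2] as values at [x]. *)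
Lemma nat_jump_reduction_constrained {X U V : rep} (f : problem X Nat_rep) (g : problem U V) aH aK :
  single_valued f -> nonconstant f -> reduces_via (jump f) g (assoc_fun aH) (assoc_fun aK) ->
  exists p0 k, forall p x t, delta (jump_rep X) p x -> dom f x -> agree k p p0 ->
    assoc_fun aK p t -> ~ unconstrained_at g t.
Proof.
  intros sv [x1 [x2 [y1 [y2 [F1 [F2 Ne]]]]]] W.
  destruct (delta_surj X x1) as [q1 Hq1].
  set (p1 := const_limit q1). pose proof (jump_name_const_limit X q1 x1 Hq1) as Hp1.
  destruct (reduces_via_run (jump f) g _ _ _ p1 x1 W (canonical_realizer_partial_fun g)
              (canonical_realizer_realizes g) Hp1 (ex_intro _ y1 F1))
    as [t1 [s1 [r1 [z1 [_ [G1 [H1 [D1 F1']]]]]]]].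
  simpl in D1. rewrite (sv _ _ _ F1' F1) in D1.
  destruct (assoc_fun_continuous aH _ _ 0 H1) as [k1 C1].
  destruct (delta_surj X x2) as [q2 Hq2].
  set (p3 := graft p1 k1 (const_limit q2)).
  pose proof (jump_name_graft X p1 k1 _ x2 (jump_name_const_limit X q2 x2 Hq2)) as Hp3.
  destruct (reduces_via_run (jump f) g _ _ _ p3 x2 W (canonical_realizer_partial_fun g)
              (canonical_realizer_realizes g) Hp3 (ex_intro _ y2 F2))
    as [t3 [s3 [r3 [z3 [_ [G3 [H3 [D3 F3']]]]]]]].
  simpl in D3. rewrite (sv _ _ _ F3' F2) in D3.
  destruct (assoc_fun_continuous aH _ _ 0 H3) as [k3 C3].
  exists p3, (Nat.max k1 k3). intros p x t Hp Hd Hag Kt Hu.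
  destruct (reduces_via_answer_override (jump f) g aH aK p x t s1 W
              (Hu s1 (canonical_realizer_name g _ _ G1)) Hp Hd Kt) as [r [y [Hr [Hy Hf]]]].
  destruct (reduces_via_answer_override (jump f) g aH aK p x t s3 W
              (Hu s3 (canonical_realizer_name g _ _ G3)) Hp Hd Kt) as [r' [y' [Hr' [Hy' Hf']]]].
  simpl in Hy, Hy'.
  assert (E1 : r 0 = r1 0).
  { apply (C1 (bjoin p s1)); auto. apply bjoin_agree; [|intros i _; auto].
    apply agree_trans with p3; [apply agree_sym, graft_agree|].
    apply agree_sym, (agree_weaken (Nat.max k1 k3)); auto; lia. }
  assert (E3 : r' 0 = r3 0).
  { apply (C3 (bjoin p s3)); auto. apply bjoin_agree; [|intros i _; auto].
    apply agree_sym, (agree_weaken (Nat.max k1 k3)); auto; lia. }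
  apply Ne. rewrite <- D1, <- D3, <- E1, <- E3, Hy, Hy'. apply (sv x); auto.
Qed.

Lemma sier_delta_nonzero r b n : delta Sier_rep r b -> r n <> 0 -> b = true.
Proof.
  simpl. intros [h1 _] hn. destruct b; [reflexivity | exfalso; apply hn, h1; reflexivity].
Qed.

Lemma sier_delta_true r : delta Sier_rep r true -> exists n, r n <> 0.
Proof.
  simpl. intros [_ h2]. apply NNPP. intros N.
  assert (true = false) by (apply h2; intros n; apply NNPP; intro c; apply N; eauto).
  discriminate.
Qed.

Lemma sier_delta_false r n : delta Sier_rep r false -> r n = 0.
Proof. simpl. intros [h1 _]. apply h1. auto. Qed.

Lemma pcompletion_answer_with_blanks {U V : rep} (g : problem U V) t k :
  exists s, agree k s (fun _ => 0) /\
    realizes (override (canonical_realizer (pcompletion g)) t s) (pcompletion g).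
Proof.
  destruct (classic (names_dom_completion g t)) as [[u [Hu [v Hv]]] | Nt].
  - destruct (delta_surj V v) as [s Hs].
    exists (pad k s). split; [apply pad_agree|].
    apply override_realizes; [apply canonical_realizer_realizes|]. intros x Hx _.
    rewrite (delta_fun (completion U) t x (Some u) Hx Hu).
    exists (Some v). split; [exists s; split; auto; apply minus1_pad|].
    intros u' e _. injection e as <-. eauto.
  - exists (fun _ => 0). split; [intros i _; auto | apply override_pcompletion, Nt].
Qed.

(* Fix a name [pT] of some [xT] with [f xT = true] and a position [n] where the
   output of the reduction is nonzero, together with the prefix that fixes it.
   On this cylinder, if the query [t] did not name a point of [dom g], any
   answer would do: answering as in the run on [pT] shows [f x = true], so
   answering with all zeros also yields [true], hence a
   nonzero output symbol fixed by a finite prefix of the input and of the zero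
   answer. Grafting that prefix onto a name of some [xF] with [f xF = false],
   and answering its query with a padded name, reproduces that symbol: a
   contradiction. *)
Lemma sier_jump_reduction_forces_domain {X U V : rep} (f : problem X Sier_rep)
    (g : problem U V) aH aK :
  single_valued f -> nonconstant f ->
  reduces_via (jump f) (pcompletion g) (assoc_fun aH) (assoc_fun aK) ->
  exists p0 k, forall p x t, delta (jump_rep X) p x -> dom f x -> agree k p p0 ->
    assoc_fun aK p t -> names_dom_completion g t.
Proof.
  intros sv [x1 [x2 [y1 [y2 [F1 [F2 Ne]]]]]] W.
  assert (Hxs : exists xT xF, f xT true /\ f xF false) by (destruct y1, y2; try congruence; eauto).
  clear x1 x2 y1 y2 F1 F2 Ne. destruct Hxs as [xT [xF [FT FF]]].
  destruct (delta_surj X xT) as [qT HqT].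
  set (pT := const_limit qT). pose proof (jump_name_const_limit X qT xT HqT) as HpT.
  destruct (reduces_via_run (jump f) _ _ _ _ pT xT W (canonical_realizer_partial_fun _)
              (canonical_realizer_realizes _) HpT (ex_intro _ true FT))
    as [tT [sT [rT [zT [_ [_ [HT [DT FT']]]]]]]].
  rewrite (sv _ _ _ FT' FT) in DT.
  destruct (sier_delta_true rT DT) as [n Hn].
  destruct (assoc_fun_continuous aH _ _ n HT) as [kn Cn].
  exists pT, kn. intros p x t Hp Hd Hag Kt. apply NNPP. intros Nt.
  destruct (reduces_via_answer_override (jump f) _ aH aK p x t sT W
              (override_pcompletion g t sT Nt) Hp Hd Kt) as [r [y [Hr [Hy Hf]]]].
  assert (Er : r n = rT n)
    by (apply (Cn (bjoin p sT)); auto; apply bjoin_agree; [apply agree_sym | intros i _]; auto).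
  assert (y = true) as -> by (apply (sier_delta_nonzero r y n); auto; rewrite Er; auto).
  destruct (reduces_via_answer_override (jump f) _ aH aK p x t (fun _ => 0) W
              (override_pcompletion g t _ Nt) Hp Hd Kt) as [r0 [y0 [Hr0 [Hy0 Hf0]]]].
  rewrite (sv _ _ _ Hf0 Hf) in Hy0.
  destruct (sier_delta_true r0 Hy0) as [n0 Hn0].
  destruct (assoc_fun_continuous aH _ _ n0 Hr0) as [k0 C0].
  destruct (delta_surj X xF) as [qF HqF].
  set (p' := graft p k0 (const_limit qF)).
  pose proof (jump_name_graft X p k0 _ xF (jump_name_const_limit X qF xF HqF)) as Hp'.
  destruct (reduces_via_run (jump f) _ _ _ _ p' xF W (canonical_realizer_partial_fun _)
              (canonical_realizer_realizes _) Hp' (ex_intro _ false FF))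
    as [t' [_ [_ [_ [K' _]]]]].
  destruct (pcompletion_answer_with_blanks g t' k0) as [s' [Zs' Rs']].
  destruct (reduces_via_answer_override (jump f) _ aH aK p' xF t' s' W Rs' Hp'
              (ex_intro _ false FF) K') as [r' [y' [Hr' [Hy' Hf']]]].
  rewrite (sv _ _ _ Hf' FF) in Hy'.
  assert (E0 : r' n0 = r0 n0)
    by (apply (C0 (bjoin p' s')); auto; apply bjoin_agree; apply agree_sym; auto; apply graft_agree).
  apply Hn0. rewrite <- E0. apply (sier_delta_false r' n0 Hy').
Qed.

Lemma co_complete_of_cylinders {X Y : rep} (h : problem (jump_rep X) Y) :
  (forall (U V : rep) (g : problem U V) aH aK,
     reduces_via h (pcompletion g) (assoc_fun aH) (assoc_fun aK) ->
     exists p0 k, forall p x t, delta (jump_rep X) p x -> dom h x -> agree k p p0 ->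
       assoc_fun aK p t -> names_dom_completion g t) ->
  co_complete h.
Proof.
  intros Hcyl U V g. split; [|apply weihrauch_pcompletion].
  intros Hw. destruct (weihrauch_elim h _ Hw) as [aH [aK [caH [caK W]]]].
  destruct (Hcyl U V g aH aK W) as [p0 [k Hk]].
  apply (weihrauch_of_pcompletion_on_cylinder h g aH aK p0 k); auto.
Qed.

Lemma co_total_of_cylinders {X Y : rep} (h : problem (jump_rep X) Y) :
  (forall (U V : rep) (g : problem U V) aH aK,
     reduces_via h (totalization g) (assoc_fun aH) (assoc_fun aK) ->
     exists p0 k, forall p x t, delta (jump_rep X) p x -> dom h x -> agree k p p0 ->
       assoc_fun aK p t -> names_dom g t) ->
  co_total h.
Proof.
  intros Hcyl U V g. split; [|apply weihrauch_totalization].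
  intros Hw. destruct (weihrauch_elim h _ Hw) as [aH [aK [caH [caK W]]]].
  destruct (Hcyl U V g aH aK W) as [p0 [k Hk]].
  apply (weihrauch_of_totalization_on_cylinder h g aH aK p0 k); auto.
Qed.

Theorem proposition4p19 :
  (forall (X : rep) (f : problem X Nat_rep),
     single_valued f -> nonconstant f ->
     co_complete (jump f) /\ co_total (jump f)) /\
  (forall (X : rep) (fS : problem X Sier_rep),
     single_valued fS -> nonconstant fS ->
     co_complete (jump fS)).
Proof.
  split.
  - intros X f sv nc. split.
    + apply co_complete_of_cylinders. intros U V g aH aK W.
      destruct (nat_jump_reduction_constrained f _ aH aK sv nc W) as [p0 [k Hk]].
      exists p0, k. intros. apply names_dom_completion_of_constrained. eauto.
    + apply co_total_of_cylinders. intros U V g aH aK W.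
      destruct (nat_jump_reduction_constrained f _ aH aK sv nc W) as [p0 [k Hk]].
      exists p0, k. intros. apply names_dom_of_constrained. eauto.
  - intros X f sv nc. apply co_complete_of_cylinders. intros U V g aH aK W.
    exact (sier_jump_reduction_forces_domain f g aH aK sv nc W).
Qed.
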